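(* If $(x,y)$ and $(x,y')$ are both $\mathbf{x}$-vertices of $R$, then $d_R((x,y),(x,y'))\le d(\bar B)$.
   Context: Let $A\in\mathbb{R}^{m_1\times n_1}$, nonzero $a\in\mathbb{R}^{1\times n_1}$, nonzero $b\in\mathbb{R}^{1\times n_2}$, $B\in\mathbb{R}^{m_2\times n_2}$, $c_A\in\mathbb{R}^{m_1}$, $c_B\in\mathbb{R}^{m_2}$, $c_a,c_b\in\mathbb{R}$, and $R=\{(x,y)\in\mathbb{R}^{n_1}\times\mathbb{R}^{n_2}: Ax=c_A,\ ax+by=c_a+c_b,\ By=c_B,\ x,y\ge 0\}$. Assume $R$ is simple (nondegenerate). Let $P_A=\{x: Ax=c_A, x\ge 0\}$ and $\bar B=\begin{bmatrix}b\\ B\end{bmatrix}$. A vertex $(x,y)$ of $R$ is an $\mathbf{x}$-vertex if $x$ is a vertex of $P_A$. $d_R(v,w)$ is the minimum number of edges of an edge walk in $R$ from $v$ to $w$. For a polyhedron $P$, $d(P)$ is its combinatorial diameter (maximum distance over pairs of vertices), and for a matrix $M\in\mathbb{R}^{m\times n}$, $d(M):=\max\{d(\{z: Mz=r, z\ge 0\}): r\in\mathbb{R}^m\}$. *)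

From HB Require Import structures.
From mathcomp Require Import all_boot all_order all_algebra.
Set Implicit Arguments. Unset Strict Implicit. Unset Printing Implicit Defensive.
Import Order.TTheory GRing.Theory Num.Theory.
Local Open Scope ring_scope.

Section Poly.
Variables (R : realFieldType) (m n : nat) (M : 'M[R]_(m, n)) (r : 'cV[R]_m).

Definition inP (z : 'cV[R]_n) : Prop := M *m z = r /\ forall i, 0 <= z i 0.

Definition valid (c : 'rV[R]_n) (d : R) : Prop :=
  forall z, inP z -> (c *m z) 0 0 <= d.

Definition is_vertex (v : 'cV[R]_n) : Prop :=
  inP v /\ exists c d, valid c d /\
    forall z, inP z -> ((c *m z) 0 0 = d <-> z = v).

Definition is_edge (v w : 'cV[R]_n) : Prop :=
  v != w /\ inP v /\ inP w /\ exists c d, valid c d /\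
    forall z, inP z -> ((c *m z) 0 0 = d <->
      exists t : R, 0 <= t <= 1 /\ z = t *: v + (1 - t) *: w).

(* an edge walk v -> s_1 -> ... -> s_k (= w) ; it has size s edges *)
Fixpoint walk (v : 'cV[R]_n) (s : seq 'cV[R]_n) (w : 'cV[R]_n) : Prop :=
  match s with
  | [::] => v = w
  | u :: s' => is_edge v u /\ walk u s' w
  end.

Definition dist_le (v w : 'cV[R]_n) (k : nat) : Prop :=
  exists s, (size s <= k)%N /\ walk v s w.

Definition simple_poly : Prop :=
  forall v, is_vertex v -> #|[set i : 'I_n | v i 0 != 0]| = \rank M.

End Poly.

Definition diam_mx_le (R : realFieldType) (m n : nat) (M : 'M[R]_(m, n)) (D : nat) :=
  forall (r : 'cV[R]_m) u v, is_vertex M r u -> is_vertex M r v -> dist_le M r u v D.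

Section Coupled.
Variables (R : realFieldType) (m1 n1 m2 n2 : nat) (A : 'M[R]_(m1, n1))
  (a : 'rV[R]_n1) (b : 'rV[R]_n2) (B : 'M[R]_(m2, n2))
  (cA : 'cV[R]_m1) (cB : 'cV[R]_m2) (ca cb : R).

Definition MR : 'M[R]_(m1 + (1 + m2), n1 + n2) :=
  col_mx (row_mx A 0) (col_mx (row_mx a b) (row_mx 0 B)).
Definition rR : 'cV[R]_(m1 + (1 + m2)) :=
  col_mx cA (col_mx (ca + cb)%:M cB).
Definition Bbar : 'M[R]_(1 + m2, n2) := col_mx b B.

Definition x_vertex (x : 'cV[R]_n1) (y : 'cV[R]_n2) : Prop :=
  is_vertex MR rR (col_mx x y) /\ is_vertex A cA x.
End Coupled.

From mathcomp Require Import all_boot all_order all_algebra.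
From mathcomp Require Import lra.
Set Implicit Arguments. Unset Strict Implicit. Unset Printing Implicit Defensive.
Import Order.TTheory GRing.Theory Num.Theory.
Local Open Scope ring_scope.

(* For a vertex x of P_A, the fiber Q_x = {y >= 0 : Bbar y = (ca + cb - a x; cB)}
   embeds in R by y |-> (x, y).  Faces of a standard-form polyhedron are
   described by supports: a point z lies on every face containing p as soon as
   supp z is contained in supp p, and conversely {z : supp z <= supp p} is
   itself a face; so vertices and edges can be recognised by supports.  Since x is a vertex, every point of R whose
   x-part has support inside supp x has x-part x; hence vertices (x, y) of R
   give vertices y of Q_x and edges of Q_x give edges of R.  A walk of length
   at most d(Bbar) between y and y' in Q_x therefore lifts to R. *)

Section Support.
Variables (R : realFieldType) (n : nat).
Implicit Types p u w z : 'cV[R]_n.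

Definition supp_sub z p : Prop := forall i, p i 0 = 0 -> z i 0 = 0.

Definition segment u w z : Prop :=
  exists t : R, 0 <= t <= 1 /\ z = t *: u + (1 - t) *: w.

Lemma segment_supp_sub u w z : (forall i, 0 <= u i 0) -> (forall i, 0 <= w i 0) ->
  segment u w z -> supp_sub z (u + w).
Proof.
move=> u0 w0 [t [/andP [t0 t1] ->]] i; rewrite !mxE => uw0.
have [ui0 wi0] : u i 0 = 0 /\ w i 0 = 0 by have := u0 i; have := w0 i; lra.
by rewrite ui0 wi0 !mulr0 addr0.
Qed.

Definition supp_ineq p : 'rV[R]_n := - \row_k (if p k 0 == 0 then 1 else 0).

Lemma supp_ineqE p z :
  (supp_ineq p *m z) 0 0 = - \sum_k (if p k 0 == 0 then z k 0 else 0).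
Proof.
rewrite mulNmx !mxE; congr (- _); apply: eq_bigr => k _.
by rewrite mxE; case: ifP; rewrite ?mul1r ?mul0r.
Qed.

Lemma supp_ineq_le0 p z : (forall k, 0 <= z k 0) -> (supp_ineq p *m z) 0 0 <= 0.
Proof. by move=> z0; rewrite supp_ineqE oppr_le0 sumr_ge0 // => k _; case: ifP. Qed.

Lemma supp_ineq_eq0P p z : (forall k, 0 <= z k 0) ->
  (supp_ineq p *m z) 0 0 = 0 <-> supp_sub z p.
Proof.
move=> z0; rewrite supp_ineqE; split => [/eqP | zp].
  rewrite oppr_eq0 => /eqP sum0 k pk0.
  have /psumr_eq0P sum0P : forall k, true -> 0 <= if p k 0 == 0 then z k 0 else 0.
    by move=> j _; case: ifP.
  by have := sum0P sum0 k isT; rewrite pk0 eqxx.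
by rewrite big1 ?oppr0 // => k _; case: eqP => // /zp.
Qed.

End Support.

Lemma col_mx_forall2 (R : realFieldType) n1 n2 (P : R -> R -> Prop)
  (p x : 'cV[R]_n1) (q z : 'cV[R]_n2) :
  (forall k, P (col_mx p q k 0) (col_mx x z k 0)) <->
  (forall i, P (p i 0) (x i 0)) /\ (forall j, P (q j 0) (z j 0)).
Proof.
split => [Pk | [Px Pz] k].
  by split=> i; [have := Pk (lshift n2 i) | have := Pk (rshift n1 i)];
    rewrite ?col_mxEu ?col_mxEd.
by rewrite -(splitK k); case: (split k) => i /=; rewrite ?col_mxEu ?col_mxEd.
Qed.

Lemma supp_sub_col_mx (R : realFieldType) n1 n2
  (x p : 'cV[R]_n1) (z q : 'cV[R]_n2) :
  supp_sub (col_mx x z) (col_mx p q) <-> supp_sub x p /\ supp_sub z q.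
Proof. exact: (col_mx_forall2 (fun s t => s = 0 -> t = 0)). Qed.

Section Polyhedron.
Variables (R : realFieldType) (m n : nat) (M : 'M[R]_(m, n)) (r : 'cV[R]_m).
Implicit Types p u v w z : 'cV[R]_n.

Lemma inP_segment u w z : inP M r u -> inP M r w -> segment u w z -> inP M r z.
Proof.
move=> [Mu u0] [Mw w0] [t [/andP [t0 t1] ->]]; split.
  by rewrite mulmxDr -!scalemxAr Mu Mw -scalerDl addrC subrK scale1r.
by move=> i; rewrite !mxE; apply: addr_ge0; apply: mulr_ge0; rewrite ?subr_ge0.
Qed.

Lemma inP_extend p z : inP M r p -> inP M r z -> supp_sub z p ->
  exists2 e : R, 0 < e & inP M r (p + e *: (p - z)).
Proof.
move=> [Mp p0] [Mz z0] zp.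
pose S := \sum_i z i 0 / p i 0.
have ratio_ge0 i : 0 <= z i 0 / p i 0 by exact: divr_ge0.
have S0 : 0 <= S by exact: sumr_ge0.
have e0 : 0 < (1 + S)^-1 by rewrite invr_gt0; lra.
(* small enough that [e z_i <= p_i] for all [i], as [z_i / p_i <= S] *)
exists (1 + S)^-1 => //; split.
  by rewrite mulmxDr -scalemxAr mulmxBr Mp Mz subrr scaler0 addr0.
move=> i; rewrite !mxE; have [pi0 | pi_neq0] := eqVneq (p i 0) 0.
  by rewrite pi0 (zp i pi0) subrr mulr0 addr0.
have zi_le : z i 0 <= p i 0 * (1 + S).
  rewrite -{1}(divfK pi_neq0 (z i 0)) mulrC ler_wpM2l //.
  have : z i 0 / p i 0 <= S by rewrite /S (bigD1 i) //= lerDl sumr_ge0.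
  lra.
have ezi_le : (1 + S)^-1 * z i 0 <= p i 0.
  by rewrite mulrC ler_pdivrMr //; lra.
have := p0 i; have := mulr_ge0 (ltW e0) (p0 i); rewrite mulrBr; lra.
Qed.

Lemma valid_eq_supp_sub c d p z : valid M r c d -> inP M r p ->
  (c *m p) 0 0 = d -> inP M r z -> supp_sub z p -> (c *m z) 0 0 = d.
Proof.
move=> cd_valid Pp cp_d Pz zp.
(* [p] lies strictly inside a segment of P ending at [z] *)
have [e e0 Pq] := inP_extend Pp Pz zp.
have := cd_valid _ Pq; have := cd_valid _ Pz.
rewrite mulmxDr -scalemxAr mulmxBr.
move: (c *m p) (c *m z) cp_d => cp cz; rewrite !mxE => ->.
move=> cz_le; rewrite gerDl pmulr_rle0 // subr_le0 => d_le.
by apply/eqP; rewrite eq_le cz_le d_le.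
Qed.

Lemma vertex_supp_sub_eq v z : is_vertex M r v -> inP M r z -> supp_sub z v -> z = v.
Proof.
move=> [Pv [c [d [cd_valid cd_face]]]] Pz zv; apply/(cd_face z Pz).
by apply: (valid_eq_supp_sub cd_valid Pv _ Pz zv); apply/(cd_face v Pv).
Qed.

Lemma is_vertex_supp v : inP M r v ->
  (forall z, inP M r z -> supp_sub z v -> z = v) -> is_vertex M r v.
Proof.
move=> Pv supp_eq; split=> //; exists (supp_ineq v), 0; split.
  by move=> z [_ z0]; apply: supp_ineq_le0.
move=> z Pz; rewrite supp_ineq_eq0P; last exact: Pz.2.
by split=> [/(supp_eq z Pz) | ->].
Qed.

Lemma edge_supp_sub_segment u w z : is_edge M r u w -> inP M r z ->
  supp_sub z (u + w) -> segment u w z.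
Proof.
move=> [_ [Pu [Pw [c [d [cd_valid cd_face]]]]]] Pz zuw.
have mid_seg : segment u w (2^-1 *: u + (1 - 2^-1) *: w).
  by exists 2^-1; split=> //; apply/andP; split; lra.
have Pmid := inP_segment Pu Pw mid_seg.
apply/(cd_face z Pz)/(valid_eq_supp_sub cd_valid Pmid _ Pz); first exact/(cd_face _ Pmid).
move=> i; rewrite !mxE => mid0; apply: zuw; rewrite mxE.
by have := Pu.2 i; have := Pw.2 i; lra.
Qed.

Lemma is_edge_supp u w : u != w -> inP M r u -> inP M r w ->
  (forall z, inP M r z -> supp_sub z (u + w) -> segment u w z) -> is_edge M r u w.
Proof.
move=> uw Pu Pw supp_seg; do 3!split=> //; exists (supp_ineq (u + w)), 0; split.
  by move=> z [_ z0]; apply: supp_ineq_le0.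
move=> z Pz; rewrite supp_ineq_eq0P; last exact: Pz.2.
by split=> [/(supp_seg z Pz) | /(segment_supp_sub Pu.2 Pw.2)].
Qed.

End Polyhedron.

Section Coupled.
Variables (R : realFieldType) (m1 n1 m2 n2 : nat) (A : 'M[R]_(m1, n1))
  (a : 'rV[R]_n1) (b : 'rV[R]_n2) (B : 'M[R]_(m2, n2))
  (cA : 'cV[R]_m1) (cB : 'cV[R]_m2) (ca cb : R).
Implicit Types (x : 'cV[R]_n1) (u w y z : 'cV[R]_n2).

Definition fiber_rhs x : 'cV[R]_(1 + m2) := col_mx ((ca + cb)%:M - a *m x) cB.

Local Notation MR := (MR A a b B).
Local Notation rR := (rR cA cB ca cb).
Local Notation Bbar := (Bbar b B).

Lemma MR_mul_col_mx x z :
  MR *m col_mx x z = col_mx (A *m x) (col_mx (a *m x + b *m z) (B *m z)).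
Proof. by rewrite !mul_col_mx !mul_row_col !mul0mx addr0 add0r. Qed.

Lemma inP_MR_col_mx x z :
  inP MR rR (col_mx x z) <-> inP A cA x /\ inP Bbar (fiber_rhs x) z.
Proof.
rewrite /inP MR_mul_col_mx /Bbar mul_col_mx /fiber_rhs /rR.
rewrite (col_mx_forall2 (fun _ s => 0 <= s) x x z z).
split=> [[/eq_col_mx [-> /eq_col_mx [abxz ->]] [x0 z0]] | [[-> x0] [/eq_col_mx [bz ->] z0]]].
  by rewrite -abxz [a *m x + _]addrC addrK.
by rewrite bz subrKC.
Qed.

Lemma fiber_vertex x y : is_vertex MR rR (col_mx x y) -> is_vertex Bbar (fiber_rhs x) y.
Proof.
move=> Vxy; have [Px Qy] := (inP_MR_col_mx x y).1 Vxy.1.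
apply: is_vertex_supp Qy _ => z Qz zy.
have Pxz : inP MR rR (col_mx x z) by apply/inP_MR_col_mx.
have xz_xy : supp_sub (col_mx x z) (col_mx x y) by apply/supp_sub_col_mx; split=> // i.
by case/eq_col_mx: (vertex_supp_sub_eq Vxy Pxz xz_xy).
Qed.

Lemma fiber_edge x u w : is_vertex A cA x -> is_edge Bbar (fiber_rhs x) u w ->
  is_edge MR rR (col_mx x u) (col_mx x w).
Proof.
move=> Vx Euw; have [uw [Qu [Qw _]]] := Euw.
apply: is_edge_supp; first by apply: contra uw => /eqP /eq_col_mx [_ ->].
- by apply/inP_MR_col_mx; split=> //; case: Vx.
- by apply/inP_MR_col_mx; split=> //; case: Vx.
move=> v; rewrite -(vsubmxK v) add_col_mx; move: (usubmx v) (dsubmx v) => x' z.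
move=> /inP_MR_col_mx [Px' Qz] /supp_sub_col_mx [x'_xx zuw].
have x'_eq : x' = x.
  by apply: vertex_supp_sub_eq Vx Px' _ => i xi0; apply: x'_xx; rewrite mxE xi0 addr0.
subst x'.
have [t [t01 ->]] := edge_supp_sub_segment Euw Qz zuw.
by exists t; split; rewrite // !scale_col_mx add_col_mx -scalerDl subrKC scale1r.
Qed.

Lemma fiber_walk x y s y' : is_vertex A cA x -> walk Bbar (fiber_rhs x) y s y' ->
  walk MR rR (col_mx x y) (map (col_mx x) s) (col_mx x y').
Proof.
move=> Vx; elim: s y => [|u s IH] y /=; first by move->.
by case=> Eyu /IH; split; first exact: fiber_edge.
Qed.

End Coupled.

Theorem lemma3 (R : realFieldType) (m1 n1 m2 n2 : nat) (A : 'M[R]_(m1, n1))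
  (a : 'rV[R]_n1) (b : 'rV[R]_n2) (B : 'M[R]_(m2, n2))
  (cA : 'cV[R]_m1) (cB : 'cV[R]_m2) (ca cb : R) :
  a != 0 -> b != 0 ->
  simple_poly (MR A a b B) (rR cA cB ca cb) ->
  forall (x : 'cV[R]_n1) (y y' : 'cV[R]_n2),
  x_vertex A a b B cA cB ca cb x y -> x_vertex A a b B cA cB ca cb x y' ->
  forall D : nat, diam_mx_le (Bbar b B) D ->
  dist_le (MR A a b B) (rR cA cB ca cb) (col_mx x y) (col_mx x y') D.
Proof.
move=> _ _ _ x y y' [Vxy Vx] [Vxy' _] D diam_Bbar.
have [s [size_s walk_s]] := diam_Bbar _ _ _ (fiber_vertex Vxy) (fiber_vertex Vxy').
exists (map (col_mx x) s); rewrite size_map; split=> //.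
exact: fiber_walk.
Qed.
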